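(* Let $J$ be a finite set, and let $Y$ and $X_j$ ($j\in J$) be Banach lattices on a measure space $(\Omega,\Sigma,\mu)$. Then for every $\theta\in(0,1)$, \[\bigoplus_{j\in J}\big(X_j^{1-\theta}Y^\theta\big)=\Big(\bigoplus_{j\in J}X_j\Big)^{1-\theta}Y^\theta\] as sets, and both inclusion maps $\bigoplus_{j\in J}(X_j^{1-\theta}Y^\theta)\hookrightarrow(\bigoplus_{j\in J}X_j)^{1-\theta}Y^\theta$ and $(\bigoplus_{j\in J}X_j)^{1-\theta}Y^\theta\hookrightarrow\bigoplus_{j\in J}(X_j^{1-\theta}Y^\theta)$ have norm at most $\operatorname{card}J$.
   Context: For a finite family of Banach spaces $Z_j$ contained in a common linear space, $\bigoplus_{j\in J}Z_j$ denotes $\bigcap_j Z_j$ with the norm $\|x\|=\sum_{j\in J}\|x\|_{Z_j}$. For Banach lattices $X_0,X_1$ on $(\Omega,\Sigma,\mu)$ and $\theta\in(0,1)$, the Calderón product $X_0^{1-\theta}X_1^\theta$ is the space of measurable $x$ such that $|x|\le\lambda|x_0|^{1-\theta}|x_1|^\theta$ $\mu$-a.e. for some $\lambda>0$ and some $x_i\in X_i$ with $\|x_i\|_{X_i}\le1$; its norm is the infimum of such $\lambda$. *)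

From HB Require Import structures.
From mathcomp Require Import all_boot all_order all_algebra.
From mathcomp Require Import all_classical all_reals all_analysis.
Set Implicit Arguments. Unset Strict Implicit. Unset Printing Implicit Defensive.
Import Order.TTheory GRing.Theory Num.Theory.
Local Open Scope classical_set_scope.
Local Open Scope ring_scope.

Section Defs.
Context {d : measure_display} {T : measurableType d} {R : realType}.
Variable mu : {measure set T -> \bar R}.

Definition banach_lattice (M : set (T -> R)) (N : (T -> R) -> R) : Prop :=
  [/\ (forall x : T -> R, M x -> measurable_fun setT x),
      M (fun _ => 0),
      (forall x y : T -> R, measurable_fun setT x -> M y ->
         {ae mu, forall t, `|x t| <= `|y t|} -> M x /\ N x <= N y),
      (forall x y : T -> R, M x -> M y -> M (x \+ y) /\ N (x \+ y) <= N x + N y) &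
     [/\ (forall (c : R) (x : T -> R), M x -> M (fun t => c * x t) /\
                           N (fun t => c * x t) = `|c| * N x),
      (forall x : T -> R, M x -> 0 <= N x /\ (N x = 0 <-> {ae mu, forall t, x t = 0})) &
      (forall u : nat -> T -> R, (forall n, M (u n)) ->
         (forall e : R, 0 < e -> exists n0 : nat, forall n m : nat,
             (n0 <= n)%N -> (n0 <= m)%N -> N (u n \- u m) < e) ->
         exists x : T -> R, M x /\ (forall e : R, 0 < e -> exists n0 : nat,
             forall n : nat, (n0 <= n)%N -> N (u n \- x) < e))]].

(* finite direct sum: intersection with sum of norms *)
Definition dsum_mem (J : finType) (M : J -> set (T -> R)) : set (T -> R) :=
  fun x => forall j, M j x.
Definition dsum_norm (J : finType) (N : J -> (T -> R) -> R) (x : T -> R) : R :=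
  \sum_(j : J) N j x.

Definition cald_witness (M0 : set (T -> R)) (N0 : (T -> R) -> R)
  (M1 : set (T -> R)) (N1 : (T -> R) -> R) (th : R) (x : T -> R) (l : R) : Prop :=
  0 < l /\ exists x0 x1 : T -> R, [/\ M0 x0, N0 x0 <= 1, M1 x1, N1 x1 <= 1 &
     {ae mu, forall t, `|x t| <= l * (`|x0 t| `^ (1 - th)) * (`|x1 t| `^ th)}].

Definition cald_mem M0 N0 M1 N1 th : set (T -> R) :=
  fun x : T -> R => measurable_fun setT x /\ exists l : R, cald_witness M0 N0 M1 N1 th x l.

Definition cald_norm M0 N0 M1 N1 th (x : T -> R) : R :=
  inf [set l | cald_witness M0 N0 M1 N1 th x l].

End Defs.

From HB Require Import structures.
From mathcomp Require Import all_boot all_order all_algebra.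
From mathcomp Require Import all_classical all_reals all_analysis.
From mathcomp Require Import ring measurable_realfun.
Import Order.TTheory GRing.Theory Num.Theory.
Local Open Scope classical_set_scope.
Local Open Scope ring_scope.

(* Given, for each [j], a witness [|x| <= l_j |a_j|^(1-th) |b_j|^th] for [x]
   in [X_j^(1-th) Y^th], put [u := min_j |a_j|] and [v := sum_j |b_j|]. By the
   ideal property [u] lies in every [X_j] with [N_j u <= 1], so its direct-sum
   norm is at most [card J], and likewise [N_Y v <= card J]; as the minimum is
   attained at some [k], [|x| <= (sum_j l_j) u^(1-th) v^th]. Dividing [u] and
   [v] by [card J] gives a witness of size [card J * sum_j l_j]. Conversely a
   witness for the direct sum is one for each [X_j], since the direct-sum norm
   dominates each [N_j]. *)

Lemma sumr_const_card (V : pzSemiRingType) (I : finType) (c : V) :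
  \sum_(i : I) c = #|I|%:R * c.
Proof. by rewrite sumr_const mulr_natl. Qed.

Section BanachLattice.
Context {d : measure_display} {T : measurableType d} {R : realType}.
Context {mu : {measure set T -> \bar R}}.

Definition scalable_norm (M : set (T -> R)) (N : (T -> R) -> R) :=
  forall (c : R) (x : T -> R),
    M x -> M (fun t => c * x t) /\ N (fun t => c * x t) = `|c| * N x.

Context {M : set (T -> R)} {N : (T -> R) -> R}.
Hypothesis hM : banach_lattice mu M N.

Lemma banach_lattice_measurable {x : T -> R} : M x -> measurable_fun setT x.
Proof. by case: hM => + _ _ _ _; apply. Qed.

Lemma banach_lattice_ideal {x y : T -> R} : measurable_fun setT x -> M y ->
  {ae mu, forall t, `|x t| <= `|y t|} -> M x /\ N x <= N y.
Proof. by case: hM => _ _ + _ _; apply. Qed.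

Lemma banach_lattice_add {x y : T -> R} :
  M x -> M y -> M (x \+ y) /\ N (x \+ y) <= N x + N y.
Proof. by case: hM => _ _ _ + _; apply. Qed.

Lemma banach_lattice_scalable : scalable_norm M N.
Proof. by case: hM => _ _ _ _ []. Qed.

Lemma banach_lattice_norm_ge0 {x : T -> R} : M x -> 0 <= N x.
Proof. by move=> Mx; case: hM => _ _ _ _ [_ /(_ x Mx) []]. Qed.

Lemma banach_lattice_abs {x : T -> R} :
  M x -> M (fun t => `|x t|) /\ N (fun t => `|x t|) <= N x.
Proof.
move=> Mx; apply: banach_lattice_ideal => //.
  by apply: measurableT_comp => //; exact: banach_lattice_measurable Mx.
by apply: aeW => t; rewrite normr_id.
Qed.

Lemma banach_lattice_sum_abs {I : Type} (s : seq I) {f : I -> T -> R} :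
  (forall i, M (f i)) ->
  M (fun t => \sum_(i <- s) `|f i t|) /\
  N (fun t => \sum_(i <- s) `|f i t|) <= \sum_(i <- s) N (f i).
Proof.
move=> Mf; elim: s => [|i s [Ms Ns]].
  have M0 : M (fun _ => 0) by case: hM.
  have [_] := banach_lattice_scalable 0 _ M0; rewrite normr0 !mul0r => N0.
  suff -> : (fun t => \sum_(i <- [::]) `|f i t|) = (fun _ => 0) by rewrite big_nil N0.
  by apply/funext => t; rewrite big_nil.
have [Mi Ni] := banach_lattice_abs (Mf i).
have [Mis Nis] := banach_lattice_add Mi Ms.
under eq_fun do rewrite big_cons.
by rewrite big_cons; split => //; apply: le_trans Nis (lerD Ni Ns).
Qed.

End BanachLattice.

Section Calderon.
Context {d : measure_display} {T : measurableType d} {R : realType}.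
Context {mu : {measure set T -> \bar R}}.
Context {M0 : set (T -> R)} {N0 : (T -> R) -> R}.
Context {M1 : set (T -> R)} {N1 : (T -> R) -> R} {th : R}.

Local Notation witness := (cald_witness mu M0 N0 M1 N1 th).
Local Notation norm := (cald_norm mu M0 N0 M1 N1 th).

Lemma cald_witness_has_lbound (x : T -> R) : has_lbound (witness x).
Proof. by exists 0 => l [/ltW]. Qed.

Lemma cald_norm_le_witness {x : T -> R} {l : R} : witness x l -> norm x <= l.
Proof. exact/ge_inf/cald_witness_has_lbound. Qed.

Lemma cald_witness_lt_norm {x : T -> R} {e : R} :
  cald_mem mu M0 N0 M1 N1 th x -> 0 < e -> exists2 l, witness x l & l < norm x + e.
Proof.
move=> [_ [l xl]] e0; apply: inf_adherent e0 _.
by split; [exists l | exact: cald_witness_has_lbound].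
Qed.

Lemma cald_witness_rescale {x x0 x1 : T -> R} {l c : R} :
  scalable_norm M0 N0 -> scalable_norm M1 N1 -> 0 < l -> 0 < c ->
  M0 x0 -> N0 x0 <= c -> M1 x1 -> N1 x1 <= c ->
  {ae mu, forall t, `|x t| <= l * `|x0 t| `^ (1 - th) * `|x1 t| `^ th} ->
  witness x (l * c).
Proof.
move=> sc0 sc1 l0 c0 Mx0 Nx0 Mx1 Nx1 xle.
split; first exact: mulr_gt0.
have ci0 : 0 <= c^-1 by rewrite invr_ge0 ltW.
have [Ma Na] := sc0 c^-1 _ Mx0.
have [Mb Nb] := sc1 c^-1 _ Mx1.
exists (fun t => c^-1 * x0 t), (fun t => c^-1 * x1 t); split => //.
- by rewrite Na ger0_norm // ler_pdivrMl // mulr1.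
- by rewrite Nb ger0_norm // ler_pdivrMl // mulr1.
apply: filterS xle => t /le_trans; apply; rewrite le_eqVlt; apply/predU1P; left.
have cK y : `|y| = c * `|c^-1 * y|.
  by rewrite normrM ger0_norm // mulrA divff ?mul1r // gt_eqF.
rewrite [`|x0 t|]cK [`|x1 t|]cK !powRM ?normr_ge0 ?(ltW c0) //.
have cc : c `^ (1 - th) * c `^ th = c.
  by rewrite -powRD ?subrK ?powRr1 ?oner_eq0 ?implybT ?ltW.
rewrite -[in l * c]cc; ring.
Qed.

End Calderon.

Section CalderonMonotone.
Context {d : measure_display} {T : measurableType d} {R : realType}.
Context {mu : {measure set T -> \bar R}}.
Context {M0 M0' : set (T -> R)} {N0 N0' : (T -> R) -> R}.
Context {M1 : set (T -> R)} {N1 : (T -> R) -> R} {th : R}.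
Hypothesis M0_sub : forall y : T -> R, M0 y -> M0' y /\ N0' y <= N0 y.

Lemma cald_witness_sub {x : T -> R} {l : R} :
  cald_witness mu M0 N0 M1 N1 th x l -> cald_witness mu M0' N0' M1 N1 th x l.
Proof.
move=> [l0 [x0 [x1 [Mx0 Nx0 Mx1 Nx1 xle]]]]; split => //.
have [M'x0 N'x0] := M0_sub _ Mx0.
by exists x0, x1; split => //; apply: le_trans Nx0.
Qed.

Lemma cald_norm_sub {x : T -> R} : cald_mem mu M0 N0 M1 N1 th x ->
  cald_norm mu M0' N0' M1 N1 th x <= cald_norm mu M0 N0 M1 N1 th x.
Proof.
move=> [_ [l xl]]; apply: lb_le_inf; first by exists l.
by move=> l' /cald_witness_sub; apply: cald_norm_le_witness.
Qed.

End CalderonMonotone.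

Section DirectSum.
Context {d : measure_display} {T : measurableType d} {R : realType}.
Context {mu : {measure set T -> \bar R}}.
Context {J : finType} {X : J -> set (T -> R)} {NX : J -> (T -> R) -> R}.
Hypothesis hX : forall j, banach_lattice mu (X j) (NX j).

Lemma dsum_mem_component j (x : T -> R) :
  dsum_mem X x -> X j x /\ NX j x <= dsum_norm NX x.
Proof.
move=> Xx; split; first exact: Xx.
rewrite /dsum_norm (bigD1 j) //= lerDl.
by apply: sumr_ge0 => i _; exact: (banach_lattice_norm_ge0 (hX i) (Xx i)).
Qed.

Lemma dsum_scalable : scalable_norm (dsum_mem X) (dsum_norm NX).
Proof.
move=> c x Xx; have sc j := banach_lattice_scalable (hX j) c _ (Xx j).
split => [j|]; first exact: (sc j).1.
by rewrite /dsum_norm mulr_sumr; apply: eq_bigr => j _; exact: (sc j).2.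
Qed.

Variable j0 : J.

Definition absmin (f : J -> T -> R) (t : T) : R :=
  \big[Num.min/`|f j0 t|]_(j : J) `|f j t|.

Lemma absmin_le f j t : absmin f t <= `|f j t|.
Proof. exact: bigmin_le. Qed.

Lemma absmin_ge0 f t : 0 <= absmin f t.
Proof. by apply/bigmin_geP; split. Qed.

Lemma absmin_attained f t : exists k, absmin f t = `|f k t|.
Proof.
exists [arg min_(i < j0) `|f i t|]%O; apply/le_anti; rewrite absmin_le /=.
by case: arg_minP => // k _ kmin; apply/bigmin_geP; split => [|i _]; apply: kmin.
Qed.

Lemma measurable_absmin {f : J -> T -> R} :
  (forall j, measurable_fun setT (f j)) -> measurable_fun setT (absmin f).
Proof.
move=> mf; have mabs j : measurable_fun setT (fun t => `|f j t|).
  by apply: measurableT_comp => //; exact: mf.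
rewrite /absmin; elim: (index_enum J) => [|j s IH].
  by under eq_fun do rewrite big_nil; exact: mabs.
under eq_fun => t do rewrite big_cons.
exact: measurable_minr.
Qed.

Lemma absmin_mem {f : J -> T -> R} : (forall j, X j (f j)) ->
  dsum_mem X (absmin f) /\ forall j, NX j (absmin f) <= NX j (f j).
Proof.
move=> Xf; have mf j := banach_lattice_measurable (hX j) (Xf j).
have ideal j := banach_lattice_ideal (hX j) (measurable_absmin mf) (Xf j).
suff le j : {ae mu, forall t, `|absmin f t| <= `|f j t|}.
  by split=> j; have [] := ideal j (le j).
by apply: aeW => t; rewrite ger0_norm ?absmin_le ?absmin_ge0.
Qed.

Context {Y : set (T -> R)} {NY : (T -> R) -> R} {th : R}.
Hypotheses (hY : banach_lattice mu Y NY) (th_ge0 : 0 <= th).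

Local Notation n := (#|J|%:R : R).

Lemma cald_witness_dsum (x : T -> R) (l : J -> R) :
  (forall j, cald_witness mu (X j) (NX j) Y NY th x (l j)) ->
  cald_witness mu (dsum_mem X) (dsum_norm NX) Y NY th x ((\sum_j l j) * n).
Proof.
move=> /all_and2 [l_gt0 /boolp.choice [x0 /boolp.choice [x1 wit]]].
have /all_and5 [Xx0 Nx0 Yx1 Nx1 xle] := wit.
pose v t := \sum_j `|x1 j t|.
have [uX uN] := absmin_mem Xx0.
have [vY vN] := banach_lattice_sum_abs hY (index_enum J) Yx1.
have sum_le1 (F : J -> R) : (forall j, F j <= 1) -> \sum_j F j <= n.
  by move=> F1; rewrite -[n]mulr1 -sumr_const_card; apply: ler_sum => j _.
have le_sum (F : J -> R) k : (forall j, 0 <= F j) -> F k <= \sum_j F j.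
  by move=> F0; rewrite (bigD1 k) //= lerDl sumr_ge0.
have l_ge0 j : 0 <= l j by apply/ltW.
apply: cald_witness_rescale dsum_scalable (banach_lattice_scalable hY) _ _
  uX _ vY _ _.
- exact: lt_le_trans (l_gt0 j0) (le_sum _ _ l_ge0).
- by rewrite ltr0n; apply/card_gt0P; exists j0.
- by apply: sum_le1 => j; apply: le_trans (uN j) (Nx0 j).
- exact: le_trans vN (sum_le1 _ Nx1).
apply: filterS (filter_forall (ae_filter_ringOfSetsType mu) xle) => t xlet.
have [k uk] := absmin_attained x0 t.
apply: le_trans (xlet k) _.
rewrite [`|absmin _ _|]ger0_norm ?absmin_ge0 // uk.
apply: ler_pM; rewrite ?mulr_ge0 ?powR_ge0 //.
  by apply: ler_wpM2r; [exact: powR_ge0 | exact: le_sum].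
apply: ge0_ler_powR; rewrite ?nnegrE ?normr_ge0 //.
by rewrite [`|v t|]ger0_norm ?sumr_ge0 //; apply: (le_sum (fun j => `|x1 j t|)).
Qed.

Local Notation cald_j := (fun j => cald_mem mu (X j) (NX j) Y NY th).
Local Notation cald_norm_j := (fun j => cald_norm mu (X j) (NX j) Y NY th).

Lemma cald_witness_dsum_near (x : T -> R) (e : R) : dsum_mem cald_j x -> 0 < e ->
  exists2 L, cald_witness mu (dsum_mem X) (dsum_norm NX) Y NY th x L &
             L <= n * dsum_norm cald_norm_j x + e.
Proof.
move=> xmem e_gt0.
have n_gt0 : 0 < n by rewrite ltr0n; apply/card_gt0P; exists j0.
have tol_gt0 : 0 < e / (n * n) by rewrite divr_gt0 ?mulr_gt0.
have near j : exists l,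
    cald_witness mu (X j) (NX j) Y NY th x l /\ l < cald_norm_j j x + e / (n * n).
  by have [l ? ?] := cald_witness_lt_norm (xmem j) tol_gt0; exists l.
have [l /all_and2 [wit lt_l]] := boolp.choice near.
exists ((\sum_j l j) * n); first exact: cald_witness_dsum.
apply: le_trans (_ : (\sum_j (cald_norm_j j x + e / (n * n))) * n <= _).
  by apply: ler_wpM2r; [exact: ltW | apply: ler_sum => j _; apply: ltW].
rewrite big_split /= sumr_const_card mulrDl; apply: lerD; first by rewrite mulrC.
have -> : n * (e / (n * n)) * n = e by field; rewrite gt_eqF.
exact: lexx.
Qed.

End DirectSum.

Theorem lemma4p9 (d : measure_display) (T : measurableType d) (R : realType)
  (mu : {measure set T -> \bar R}) (J : finType)
  (X : J -> set (T -> R)) (NX : J -> (T -> R) -> R)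
  (Y : set (T -> R)) (NY : (T -> R) -> R)
  (hX : forall j, banach_lattice mu (X j) (NX j))
  (hY : banach_lattice mu Y NY)
  (hJ : (0 < #|J|)%N)
  (theta : R) (h0 : 0 < theta) (h1 : theta < 1) :
  [/\ dsum_mem (fun j => cald_mem mu (X j) (NX j) Y NY theta)
        = cald_mem mu (dsum_mem X) (dsum_norm NX) Y NY theta,
      (forall x, dsum_mem (fun j => cald_mem mu (X j) (NX j) Y NY theta) x ->
         cald_norm mu (dsum_mem X) (dsum_norm NX) Y NY theta x
           <= #|J|%:R * dsum_norm (fun j => cald_norm mu (X j) (NX j) Y NY theta) x) &
      (forall x, cald_mem mu (dsum_mem X) (dsum_norm NX) Y NY theta x ->
         dsum_norm (fun j => cald_norm mu (X j) (NX j) Y NY theta) x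
           <= #|J|%:R * cald_norm mu (dsum_mem X) (dsum_norm NX) Y NY theta x)].
Proof.
have [j0 _] := card_gt0P hJ.
have near := cald_witness_dsum_near hX j0 hY (ltW h0).
split.
- apply/funext => x; apply/propext; split => [xmem | [mx [l xl]] j].
    split; first exact: (xmem j0).1.
    by have [L ? _] := near x 1 xmem ltr01; exists L.
  by split => //; exists l; apply: cald_witness_sub xl; exact: dsum_mem_component.
- move=> x xmem; apply/ler_addgt0Pr => e e0.
  have [L xL Lle] := near x e xmem e0.
  exact: le_trans (cald_norm_le_witness xL) Lle.
- move=> x xmem; rewrite -sumr_const_card.
  by apply: ler_sum => j _; apply: cald_norm_sub xmem; exact: dsum_mem_component.
Qed.
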